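(* Let $d \ge 1$, let $f: \mathbb{R}^d \to \mathbb{R}^d$ be differentiable, let ${\mathbf{x}}_0 \in \mathbb{R}^d$, and let $A = J_f({\mathbf{x}}_0)$ be the $d \times d$ Jacobian matrix of $f$ at ${\mathbf{x}}_0$. Assume $f$ is $L$-Lipschitz continuous with Lipschitz constant $L < 1$ (so that the spectral radius of $A$ satisfies $\rho(A) \le L < 1$). Then the quantity $$\mathcal{E}(A) := \mathrm{Tr}(A) - \log |\det(I + A)|$$ satisfies $$|\mathcal{E}(A)| \le d\big(-\log(1-L) - L\big).$$
   Context: $I$ denotes the $d\times d$ identity matrix, $\mathrm{Tr}$ the trace, and Lipschitz continuity is with respect to the Euclidean norm on $\mathbb{R}^d$. *)

From mathcomp Require Import all_boot all_order all_algebra.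
From mathcomp Require Import all_classical all_reals all_analysis.
Set Implicit Arguments. Unset Strict Implicit. Unset Printing Implicit Defensive.
Import Order.TTheory GRing.Theory Num.Theory.
Local Open Scope ring_scope.

(* Euclidean norm on row vectors R^n (the library's default norm on 'rV is the max norm). *)
Definition euclid_norm (R : realType) (n : nat) (v : 'rV[R]_n) : R :=
  Num.sqrt (\sum_(i < n) v ord0 i ^+ 2).

Definition euclid_lipschitz (R : realType) (n : nat) (f : 'rV[R]_n -> 'rV[R]_n) (L : R) : Prop :=
  forall x y : 'rV[R]_n, euclid_norm (f x - f y) <= L * euclid_norm (x - y).

From mathcomp Require Import all_boot all_order all_algebra.
From mathcomp Require Import all_classical all_reals all_analysis.
From mathcomp Require Import complex spectral mxred.
From mathcomp Require Import ring lra.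
Import Order.TTheory GRing.Theory Num.Theory.
Import numFieldNormedType.Exports ComplexField.Normc.

(* Over the complex numbers the Jacobian A is triangularizable (Schur), so
   Tr A = sum_i l_i and det (I + A) = prod_i (1 + l_i) for its eigenvalues l_i,
   whence E(A) = sum_i (Re l_i - ln |1 + l_i|).  Differentiating the Lipschitz
   bound gives |v A| <= L |v|, so |l_i| <= L, and each term is bounded by
   -ln (1 - L) - L through the second-order Taylor estimates of ln around 1. *)

Set Implicit Arguments.
Unset Strict Implicit.
Unset Printing Implicit Defensive.

Local Open Scope ring_scope.

(* Real and imaginary parts as elements of [R]; the generic ['Re] lands in [R[i]]. *)
Local Notation Re := complex.Re.
Local Notation Im := complex.Im.

Section LnEstimates.
Variable R : realType.

Definition ln_taylor2_rem (t : R) := ln t - (t - 1) + (t - 1) ^+ 2 / 2.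

Lemma is_derive_ln_taylor2_rem (t : R) : 0 < t ->
  is_derive t 1 ln_taylor2_rem ((t - 1) ^+ 2 / t).
Proof.
move=> t_gt0; have ln' := is_derive1_ln t_gt0.
apply: is_derive_eq.
rewrite !scaler0 !subr0 !scaler1 ?addr0 ?add0r /GRing.scale /=.
by field; lra.
Qed.

Lemma ln_taylor2_rem_le (a b : R) : 0 < a -> a <= b ->
  ln_taylor2_rem a <= ln_taylor2_rem b.
Proof.
move=> a_gt0 ab.
have gt0 x : x \in `[a, b] -> 0 < x.
  by rewrite in_itv /= => /andP[ax _]; apply: lt_le_trans ax.
have gt0_oo x : x \in `]a, b[ -> 0 < x by move/subset_itv_oo_cc; apply: gt0.
apply: (@ger0_derive1_ndecr R _ a b) => //.
- by move=> x /gt0_oo/is_derive_ln_taylor2_rem[].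
- move=> x /gt0_oo x_gt0; have rem' := is_derive_ln_taylor2_rem x_gt0.
  by rewrite derive1E derive_val divr_ge0 ?sqr_ge0 ?ltW.
- apply: derivable_within_continuous => x /gt0.
  by move=> /is_derive_ln_taylor2_rem[].
Qed.

Lemma ln_taylor2_rem1 : ln_taylor2_rem 1 = 0.
Proof. by rewrite /ln_taylor2_rem ln1 subrr expr0n /= mul0r subr0 addr0. Qed.

Lemma sqr_half_le_ln1B (r : R) : 0 <= r < 1 -> r ^+ 2 / 2 <= - ln (1 - r) - r.
Proof.
move=> /andP[r_ge0 r_lt1].
have := @ln_taylor2_rem_le (1 - r) 1 ltac:(lra) ltac:(lra).
rewrite ln_taylor2_rem1 /ln_taylor2_rem (_ : 1 - r - 1 = - r) ?sqrrN; lra.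
Qed.

Lemma sub_ln1D_le (x : R) : 0 <= x -> x - ln (1 + x) <= x ^+ 2 / 2.
Proof.
move=> x_ge0.
have := @ln_taylor2_rem_le 1 (1 + x) ltac:(lra) ltac:(lra).
rewrite ln_taylor2_rem1 /ln_taylor2_rem (_ : 1 + x - 1 = x); lra.
Qed.

Lemma sub_ln1D_le_ln1B (x r : R) : r < 1 -> `|x| <= r ->
  x - ln (1 + x) <= - ln (1 - r) - r.
Proof.
move=> r_lt1; rewrite ler_norml => /andP[rx xr].
have r_ge0 : 0 <= r by lra.
have [x_le0|x_gt0] := leP x 0; last first.
  have := sub_ln1D_le (ltW x_gt0); have := @sqr_half_le_ln1B r ltac:(lra).
  have : x ^+ 2 <= r ^+ 2 by nra.
  lra.
have t_gt0 : 0 < (1 - r) / (1 + x) by rewrite divr_gt0 //; lra.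
have := @le_ln1Dx R ((1 - r) / (1 + x) - 1) ltac:(lra).
rewrite addrC subrK ln_div ?posrE; [|lra|lra].
have : (1 - r) / (1 + x) <= 1 - x - r by rewrite ler_pdivrMr; nra.
lra.
Qed.

Lemma ln_prod I r (P : pred I) (F : I -> R) : (forall i, P i -> 0 < F i) ->
  ln (\prod_(i <- r | P i) F i) = \sum_(i <- r | P i) ln (F i).
Proof.
move=> F_gt0; apply: (@big_morph_in _ _ [pred x : R | 0 < x]).
- by move=> x y; rewrite !inE; apply: mulr_gt0.
- by rewrite inE ltr01.
- by move=> x y; rewrite !inE => x_gt0 y_gt0; rewrite lnM ?posrE.
- exact: ln1.
- by move=> i /F_gt0.
Qed.

Lemma normc1D_gt0 (z : R[i]) : Re z ^+ 2 + Im z ^+ 2 < 1 -> 0 < normc (1 + z).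
Proof.
case: z => x y /= z_lt1; rewrite add0r sqrtr_gt0.
have : -1 < x by nra.
nra.
Qed.

Lemma Re_sub_ln_normc1D_le (z : R[i]) (r : R) : 0 <= r < 1 ->
  Re z ^+ 2 + Im z ^+ 2 <= r ^+ 2 ->
  `|Re z - ln (normc (1 + z))| <= - ln (1 - r) - r.
Proof.
case: z => x y /=; rewrite add0r => /andP[r_ge0 r_lt1] zr.
have x_le_r : `|x| <= r by rewrite ler_norml; apply/andP; split; nra.
set u := (1 + x) ^+ 2 + y ^+ 2.
have x1_gt0 : 0 < 1 + x by move: x_le_r; rewrite ler_norml; lra.
have u_gt0 : 0 < u by rewrite /u; nra.
have ln_sqrt_u : ln (Num.sqrt u) = ln u / 2.
  by rewrite -{2}(sqr_sqrtr (ltW u_gt0)) lnXn ?sqrtr_gt0 //; lra.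
have r_bound := @sqr_half_le_ln1B r ltac:(lra).
rewrite ler_norml ln_sqrt_u; apply/andP; split.
- have := @le_ln1Dx R (u - 1) ltac:(lra).
  rewrite addrC subrK.
  have : u - 1 <= 2 * x + r ^+ 2 by rewrite /u; nra.
  lra.
- have : ln (1 + x) *+ 2 <= ln u.
    by rewrite -lnXn // ler_ln ?posrE ?exprn_gt0 // /u lerDl sqr_ge0.
  have := sub_ln1D_le_ln1B r_lt1 x_le_r.
  lra.
Qed.

End LnEstimates.

Section Trigonalization.
Variable C : numClosedFieldType.

Lemma tr_det1D_spectrum n (M : 'M[C]_n) :
  exists2 T : 'M[C]_n,
    \tr M = \sum_i T i i /\ \det (1%:M + M) = \prod_i (1 + T i i)
    & forall i, eigenvalue M (T i i).
Proof.
case: n => [|n] in M *.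
  by exists 0; [rewrite /mxtrace !big_ord0 det_mx00 | case].
have [P P_unitary T_trig] := Schur M (ltn0Sn n).
have P_unit := unitarymx_unit P_unitary.
set T := conjmx P M in T_trig.
have TE : T = P *m M *m invmx P by rewrite /T conjumx.
exists T; first split.
- by rewrite -/(\tr T) TE mxtrace_mulC mulKmx.
- have -> : 1%:M + M = invmx P *m (1%:M + T) *m P.
    by rewrite TE mulmxDr mulmxDl mulmx1 mulVmx // !mulmxA mulVmx // mul1mx mulmxKV.
  rewrite !det_mulmx mulrAC -det_mulmx mulVmx // det1 mul1r det_trig.
    by apply: eq_bigr => i _; rewrite !mxE eqxx mulr1n.
  apply/is_trig_mxP => i j ij; have /is_trig_mxP/(_ i j ij) Tij := T_trig.
  by rewrite mxE (Tij : T i j = 0) mxE -val_eqE /= ltn_eqF // addr0.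
- move=> i; apply: (eigenvalue_conjmx (stablemx_unit _ P_unit)).
    by rewrite row_free_unit.
  rewrite [_ \in _]eigenvalue_root_char char_poly_trig // /root horner_prod.
  by apply/prodf_eq0; exists i => //; rewrite hornerXsubC subrr.
Qed.

End Trigonalization.

Section RealMatrices.
Variable R : realType.

Definition sqnorm n (v : 'rV[R]_n) := \sum_(i < n) v ord0 i ^+ 2.

Lemma sqnorm_ge0 n (v : 'rV[R]_n) : 0 <= sqnorm v.
Proof. by apply: sumr_ge0 => i _; apply: sqr_ge0. Qed.

Lemma sqnormZ n (c : R) (v : 'rV[R]_n) : sqnorm (c *: v) = c ^+ 2 * sqnorm v.
Proof. by rewrite /sqnorm mulr_sumr; apply: eq_bigr => i _; rewrite mxE exprMn. Qed.

Lemma Re_sum n (F : 'I_n -> R[i]) : Re (\sum_i F i) = \sum_i Re (F i).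
Proof. exact: (raddf_sum (@complex.Re R : Rcomplex R -> R)). Qed.

Lemma Im_sum n (F : 'I_n -> R[i]) : Im (\sum_i F i) = \sum_i Im (F i).
Proof. exact: (raddf_sum (@complex.Im R : Rcomplex R -> R)). Qed.

Lemma ReMr (z : R[i]) (c : R) : Re (z * c%:C%C) = Re z * c.
Proof. by case: z => x y /=; rewrite mulr0 subr0. Qed.

Lemma ImMr (z : R[i]) (c : R) : Im (z * c%:C%C) = Im z * c.
Proof. by case: z => x y /=; rewrite mulr0 add0r. Qed.

Lemma normc_real (x : R) : normc x%:C%C = `|x|.
Proof. by rewrite /normc /= expr0n /= addr0 sqrtr_sqr. Qed.

Lemma eigenvalue_sqr_le n (M : 'M[R]_n) (c : R) :
  (forall v, sqnorm (v *m M) <= c * sqnorm v) ->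
  forall lam, eigenvalue (map_mx (real_complex R) M) lam ->
  Re lam ^+ 2 + Im lam ^+ 2 <= c.
Proof.
move=> M_le lam /eigenvalueP[v v_eigen v_neq0].
pose a := \row_j Re (v ord0 j); pose b := \row_j Im (v ord0 j).
have vM j : \sum_i v ord0 i * (M i j)%:C%C = lam * v ord0 j.
  by move/rowP/(_ j): v_eigen; rewrite !mxE => <-; apply: eq_bigr => i _; rewrite mxE.
have aM j : (a *m M) ord0 j = Re (lam * v ord0 j).
  by rewrite -vM Re_sum mxE; apply: eq_bigr => i _; rewrite ReMr mxE.
have bM j : (b *m M) ord0 j = Im (lam * v ord0 j).
  by rewrite -vM Im_sum mxE; apply: eq_bigr => i _; rewrite ImMr mxE.
have abM : sqnorm (a *m M) + sqnorm (b *m M) =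
    (Re lam ^+ 2 + Im lam ^+ 2) * (sqnorm a + sqnorm b).
  rewrite /sqnorm -!big_split mulr_sumr; apply: eq_bigr => j _ /=.
  by rewrite aM bM !mxE; case: lam {v_eigen vM aM bM} (v ord0 j) => [x y] [p q] /=; ring.
have ab_gt0 : 0 < sqnorm a + sqnorm b.
  have [j vj_neq0] : exists j, v ord0 j != 0.
    apply/existsP; apply: contraNT v_neq0 => /existsPn v0.
    by apply/eqP/rowP => j; rewrite mxE; apply/eqP/negPn/v0.
  rewrite /sqnorm -big_split (bigD1 j) //= ltr_pwDl //.
    rewrite !mxE lt_def paddr_eq0 ?sqr_ge0 ?addr_ge0 ?sqr_ge0 // !sqrf_eq0 andbT.
    by apply: contra vj_neq0; case: (v ord0 j) => p q /= /andP[/eqP-> /eqP->].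
  by apply: sumr_ge0 => i _; rewrite addr_ge0 ?sqr_ge0.
rewrite -(ler_pM2r ab_gt0) -abM mulrDr.
exact: lerD.
Qed.

Lemma tr_sub_ln_det1D_le n (M : 'M[R]_n) (L : R) : 0 <= L < 1 ->
  (forall v, sqnorm (v *m M) <= L ^+ 2 * sqnorm v) ->
  `| \tr M - ln `| \det (1%:M + M) | | <= n%:R * (- ln (1 - L) - L).
Proof.
move=> /andP[L_ge0 L_lt1] M_le.
have [T [trE detE] T_eigen] := tr_det1D_spectrum (map_mx (real_complex R) M).
have T_le i : Re (T i i) ^+ 2 + Im (T i i) ^+ 2 <= L ^+ 2.
  exact: eigenvalue_sqr_le M_le _ (T_eigen i).
have trM : \tr M = \sum_i Re (T i i) by rewrite -Re_sum -trE trace_map_mx.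
have detM : `|\det (1%:M + M)| = \prod_i normc (1 + T i i).
  rewrite -normc_real -det_map_mx map_mxD map_mx1 detE.
  exact: (big_morph _ (@normcM _) (@normc1 _)).
rewrite trM detM ln_prod; last first.
  move=> i _; apply: normc1D_gt0; apply: le_lt_trans (T_le i) _.
  by rewrite expr_lt1.
rewrite -sumrB -[n in n%:R]card_ord mulr_natl -sumr_const.
apply: le_trans (ler_norm_sum _ _ _) _.
by apply: ler_sum => i _; apply: Re_sub_ln_normc1D_le; rewrite ?L_ge0.
Qed.

End RealMatrices.

Section Lipschitz.
Variable R : realType.

Lemma euclid_lipschitz_ge0 n (f : 'rV[R]_n.+1 -> 'rV[R]_n.+1) (L : R) :
  euclid_lipschitz f L -> 0 <= L.
Proof.
move=> f_lip; have := f_lip (const_mx 1) 0; rewrite subr0.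
have norm1_gt0 : 0 < euclid_norm (const_mx 1 : 'rV[R]_n.+1).
  rewrite sqrtr_gt0 (bigD1 ord0) //= mxE expr1n ltr_pwDl //.
  by apply: sumr_ge0 => i _; apply: sqr_ge0.
by move/(le_trans (sqrtr_ge0 _)); rewrite pmulr_lge0.
Qed.

Lemma euclid_lipschitz_sqnorm n (f : 'rV[R]_n -> 'rV[R]_n) (L : R) :
  0 <= L -> euclid_lipschitz f L ->
  forall x y, sqnorm (f x - f y) <= L ^+ 2 * sqnorm (x - y).
Proof.
move=> L_ge0 f_lip x y.
rewrite -(sqr_sqrtr (sqnorm_ge0 (f x - f y))) -(sqr_sqrtr (sqnorm_ge0 (x - y))).
by rewrite -exprMn ler_pXn2r ?nnegrE ?mulr_ge0 ?sqrtr_ge0 //; apply: f_lip.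
Qed.

Local Open Scope classical_set_scope.

Lemma jacobian_sqnorm_le m n (f : 'rV[R]_m -> 'rV[R]_n) (x0 : 'rV[R]_m) (c : R) :
  differentiable f x0 ->
  (forall x, sqnorm (f x - f x0) <= c * sqnorm (x - x0)) ->
  forall v, sqnorm (v *m jacobian f x0) <= c * sqnorm v.
Proof.
move=> f_diff f_lip v; rewrite -deriveEjacobian //.
pose q h := h^-1 *: ((f \o shift x0) (h *: v) - f x0).
have q_cvg : q h @[h --> 0^'] --> 'D_v f x0 := diff_derivable f_diff.
have sq_cvg : sqnorm (q h) @[h --> 0^'] --> sqnorm ('D_v f x0).
  apply: cvg_big => [|j _]; first exact: add_continuous.
  have qj_cvg : q h ord0 j @[h --> 0^'] --> 'D_v f x0 ord0 j.
    exact: (cvg_comp _ _ q_cvg (@coord_continuous R 1 n 0 j ('D_v f x0))).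
  exact: cvgM.
apply: (cvgr_to_le sq_cvg); apply: filterS (nbhs_dnbhs_neq 0) => h h_neq0.
have h2_gt0 : 0 < h ^+ 2 by rewrite exprn_even_gt0.
have := f_lip (h *: v + x0); rewrite addrK sqnormZ => lip.
by rewrite /q /= sqnormZ exprVn ler_pdivrMl // mulrCA.
Qed.

End Lipschitz.

Theorem theorem1 (R : realType) (d : nat) (f : 'rV[R]_d.+1 -> 'rV[R]_d.+1)
  (x0 : 'rV[R]_d.+1) (L : R) :
  (forall x, differentiable f x) ->
  euclid_lipschitz f L -> L < 1 ->
  let A := jacobian f x0 in
  `| \tr A - ln `| \det (1%:M + A) | | <= d.+1%:R * (- ln (1 - L) - L).
Proof.
move=> f_diff f_lip L_lt1 /=.
have L_ge0 := euclid_lipschitz_ge0 f_lip.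
apply: tr_sub_ln_det1D_le; first by rewrite L_ge0.
apply: jacobian_sqnorm_le (f_diff x0) _ => x.
exact: euclid_lipschitz_sqnorm.
Qed.
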